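(* Let $a\in(0,1)$. There exists a constant $c>0$ such that the following holds. Let $G$ be a connected graph on vertex set $[n]$ with maximum degree $\Delta$, set $\varepsilon=n^{-a}$, let $R\sim G(n,\varepsilon/n)$, and let $G^*=G\cup R$. Then asymptotically almost surely $\iota(G^* )\ge \frac{c}{n^{a}\,\Delta^3\log n}$.
   Context: $G(n,p)$ denotes the binomial random graph on vertex set $[n]$ in which each pair is an edge independently with probability $p$. $G\cup R$ is the graph on $[n]$ whose edge set is the union of the edge sets of $G$ and $R$. For a graph $H$ on $V$ and $S\subseteq V$, $N_H(S)$ is the set of vertices in $V\setminus S$ with a neighbor in $S$, and $\iota(H)=\min\{|N_H(U)|/|U| : 0<|U|\le |V|/2\}$. Asymptotically almost surely means with probability tending to $1$ as $n\to\infty$, for an arbitrary sequence of such graphs $G=G_n$. *)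

From Stdlib Require Import Reals.
From mathcomp Require Import all_boot.

Set Implicit Arguments.
Unset Strict Implicit.
Unset Printing Implicit Defensive.

Definition is_graph (n : nat) (G : rel 'I_n) : Prop :=
  symmetric G /\ irreflexive G.

Definition connected (n : nat) (G : rel 'I_n) : Prop :=
  forall x y : 'I_n, connect G x y.

Definition nbhd (n : nat) (G : rel 'I_n) (S : {set 'I_n}) : {set 'I_n} :=
  [set v | (v \notin S) && [exists u in S, G v u]].

Definition deg (n : nat) (G : rel 'I_n) (v : 'I_n) : nat :=
  #|[set u | G v u]|.

Definition maxdeg (n : nat) (G : rel 'I_n) : nat :=
  \max_(v : 'I_n) deg G v.

(* iota(H) = min { |N_H(U)|/|U| : 0 < |U| <= n/2 }.  The seed value INR n of
   the iterated minimum is irrelevant whenever the index set is nonempty,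
   since every ratio is at most n-1. *)
Definition vertex_expansion (n : nat) (G : rel 'I_n) : R :=
  \big[Rmin/INR n]_(U : {set 'I_n} | (0 < #|U|) && (#|U|.*2 <= n))
     (Rdiv (INR #|nbhd G U|) (INR #|U|)).

Definition graph_union (n : nat) (G H : rel 'I_n) : rel 'I_n :=
  fun x y => G x y || H x y.

(* The binomial random graph G(n,p): sample space = sets of 2-subsets of [n]. *)
Definition pairs (n : nat) : {set {set 'I_n}} := [set e : {set 'I_n} | #|e| == 2].

Definition edge_rel (n : nat) (E : {set {set 'I_n}}) : rel 'I_n :=
  fun x y => (x != y) && ([set x; y] \in E).

Definition gnp_weight (n : nat) (p : R) (E : {set {set 'I_n}}) : R :=
  Rmult (pow p #|E|) (pow (Rminus R1 p) (#|pairs n| - #|E|)).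

Definition gnp_prob (n : nat) (p : R) (A : {set {set 'I_n}} -> bool) : R :=
  \big[Rplus/R0]_(E : {set {set 'I_n}} | (E \subset pairs n) && A E)
     gnp_weight p E.

Definition Rleb (x y : R) : bool := if Rle_dec x y then true else false.

From HB Require Import structures.
From Stdlib Require Import Reals Lra.
From mathcomp Require Import all_boot zify.
Set Warnings "-notation-overridden,-redundant-canonical-projection".
Set Implicit Arguments.
Unset Strict Implicit.
Unset Printing Implicit Defensive.
Local Open Scope R_scope.

(* Let G be connected on [n] with maximum degree D, R ~ G(n, q/n) with
   q = n^-a, and th = 1 / (16 n^a D^3 ln n).  If iota(G u R) < th, pick U with
   |U| <= n/2 and |W| < th |U|, where W = N_{G u R}(U).  Then R has no edge
   between U and T = [n] minus (U u W), and |T| >= n/4.  Since G is connected,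
   U is the union of the components of G - W meeting C = U n N_G(W), so the
   certificate (W, C) determines U.  For a fixed certificate the probability
   of no U-T edge is (1 - q/n)^(|U||T|) <= exp(-4 |W| D^3 ln n); there are at
   most 2^(D |W|) choices of C for a given W, and summing over nonempty W
   gives (1 + n^-3)^n - 1 <= 2/n. *)

(* Finite sums and products of reals are written \big[Rplus/R0] and
   \big[Rmult/R1]; these monoid structures make the generic bigop lemmas
   (splitting, exchange, distributivity) available for them. *)
HB.instance Definition _ := Monoid.isComLaw.Build R R0 Rplus
  (fun x y z => esym (Rplus_assoc x y z)) Rplus_comm Rplus_0_l.
HB.instance Definition _ := Monoid.isComLaw.Build R R1 Rmult
  (fun x y z => esym (Rmult_assoc x y z)) Rmult_comm Rmult_1_l.
HB.instance Definition _ := Monoid.isMulLaw.Build R R0 Rmult Rmult_0_l Rmult_0_r.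
HB.instance Definition _ :=
  Monoid.isAddLaw.Build R Rmult Rplus Rmult_plus_distr_r Rmult_plus_distr_l.

Section RealSums.
Variable I : finType.

Lemma sum_le (P : pred I) (F G : I -> R) :
  (forall i, P i -> F i <= G i) ->
  \big[Rplus/R0]_(i | P i) F i <= \big[Rplus/R0]_(i | P i) G i.
Proof.
move=> FG; apply: (big_ind2 (fun a b => a <= b)) => //; first lra.
by move=> *; apply: Rplus_le_compat.
Qed.

Lemma sum_ge0 (P : pred I) (F : I -> R) :
  (forall i, P i -> 0 <= F i) -> 0 <= \big[Rplus/R0]_(i | P i) F i.
Proof.
move=> F0; apply: (big_ind (fun a => 0 <= a)) => //; first lra.
by move=> *; lra.
Qed.

Lemma sum_le_sub (P Q : pred I) (F : I -> R) :
  (forall i, P i -> Q i) -> (forall i, Q i -> 0 <= F i) ->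
  \big[Rplus/R0]_(i | P i) F i <= \big[Rplus/R0]_(i | Q i) F i.
Proof.
move=> PQ F0; rewrite (big_mkcond P) (big_mkcond Q).
apply: sum_le => i _; case: ifP => Pi; first by rewrite PQ //; lra.
by case: ifP => Qi; [apply: F0 | lra].
Qed.

Lemma sum_ge_term (P : pred I) (F : I -> R) j :
  P j -> (forall i, P i -> 0 <= F i) -> F j <= \big[Rplus/R0]_(i | P i) F i.
Proof.
move=> Pj F0; rewrite (bigD1 j) //=.
have : 0 <= \big[Rplus/R0]_(i | P i && (i != j)) F i.
  by apply: sum_ge0 => i /andP[Pi _]; apply: F0.
lra.
Qed.

End RealSums.

Lemma sum_subsets_binomial (T : finType) (S : {set T}) (x y : R) :
  \big[Rplus/R0]_(E : {set T} | E \subset S) (x ^ #|E| * y ^ (#|S| - #|E|))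
  = (x + y) ^ #|S|.
Proof.
have [m Hm] := ubnP #|S|; elim: m S Hm => // m IH S HS.
case: (set_0Vmem S) => [->|[z zS]].
  rewrite cards0 (eq_bigl (fun E : {set T} => E == set0)); last first.
    by move=> E; rewrite subset0.
  by rewrite big_pred1_eq cards0 /=; ring.
set S' := S :\ z.
have cS : #|S| = (#|S'|).+1 by rewrite (cardsD1 z S) zS.
have IHS' := IH S' ltac:(by rewrite -ltnS -cS).
have without_z :
  \big[Rplus/R0]_(E : {set T} | (E \subset S) && (z \notin E))
     (x ^ #|E| * y ^ (#|S| - #|E|)) = y * (x + y) ^ #|S'|.
  rewrite -IHS' big_distrr; apply: eq_big => [E|E /andP[ES zE]].
    by rewrite subsetD1 andbC.
  have cE : (#|E| <= #|S'|)%N by apply: subset_leq_card; rewrite subsetD1 ES zE.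
  rewrite cS subSn //=; ring.
have with_z :
  \big[Rplus/R0]_(E : {set T} | (E \subset S) && (z \in E))
     (x ^ #|E| * y ^ (#|S| - #|E|)) = x * (x + y) ^ #|S'|.
  rewrite -IHS' big_distrr.
  rewrite (reindex_onto (fun E : {set T} => z |: E) (fun E => E :\ z)); last first.
    by move=> E /andP[_ zE]; rewrite setD1K.
  apply: eq_big => [E|E /andP[/andP[ES _] /eqP EE]].
    rewrite setU11 andbT subUset sub1set zS /=; apply/andP/idP.
      by case=> ES /eqP EE; rewrite subsetD1 ES -EE setD11.
    by rewrite subsetD1 => /andP[ES zE]; rewrite ES setU1K.
  have zE : z \notin E by rewrite -EE setD11.
  rewrite cardsU1 zE cS /= add1n subSS add0n; exact: Rmult_assoc.
rewrite (bigID (fun E : {set T} => z \in E)) /= with_z without_z cS /=; ring.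
Qed.

Lemma card_subsets (T : finType) (S : {set T}) :
  \big[Rplus/R0]_(C : {set T} | C \subset S) 1 = 2 ^ #|S|.
Proof.
have -> : 2 = 1 + 1 by lra.
rewrite -(sum_subsets_binomial S 1 1).
by apply: eq_bigr => C _; rewrite !pow1 Rmult_1_r.
Qed.

Lemma sum_nonempty_subsets (T : finType) (x : R) :
  \big[Rplus/R0]_(W : {set T} | W != set0) x ^ #|W| = (1 + x) ^ #|T| - 1.
Proof.
have := sum_subsets_binomial [set: T] x 1.
rewrite cardsT (bigD1 set0) ?sub0set //= cards0 (Rplus_comm x) => <- /=.
rewrite pow1 Rmult_1_l Rplus_comm /Rminus Rplus_assoc Rplus_opp_r Rplus_0_r.
by apply: eq_big => [W|W _]; rewrite ?subsetT // pow1 Rmult_1_r.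
Qed.

Section RandomGraph.
Variables (n : nat) (p : R).
Hypothesis p01 : 0 <= p <= 1.

Lemma gnp_weight_ge0 (E : {set {set 'I_n}}) : 0 <= gnp_weight p E.
Proof.
rewrite /gnp_weight; apply: Rmult_le_pos; apply: pow_le; rewrite /Rminus; lra.
Qed.

Lemma gnp_prob_ge0 (A : {set {set 'I_n}} -> bool) : 0 <= gnp_prob p A.
Proof. by apply: sum_ge0 => E _; apply: gnp_weight_ge0. Qed.

Lemma gnp_prob_compl (A : {set {set 'I_n}} -> bool) :
  gnp_prob p A = 1 - gnp_prob p (fun E => ~~ A E).
Proof.
have total : \big[Rplus/R0]_(E : {set {set 'I_n}} | E \subset pairs n)
               gnp_weight p E = 1.
  by rewrite /gnp_weight sum_subsets_binomial Rplus_minus pow1.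
by rewrite /gnp_prob -total [X in _ = X - _](bigID A) /=; lra.
Qed.

Lemma gnp_prob_avoid (F : {set {set 'I_n}}) :
  F \subset pairs n -> gnp_prob p (fun E => E :&: F == set0) = (1 - p) ^ #|F|.
Proof.
move=> Fpairs; set S := pairs n :\: F.
have cP : #|pairs n| = (#|F| + #|S|)%N.
  by rewrite -(cardsID F (pairs n)) (setIidPr Fpairs).
have binom := sum_subsets_binomial S p (1 - p).
rewrite Rplus_minus pow1 in binom.
transitivity ((1 - p) ^ #|F| * \big[Rplus/R0]_(E : {set {set 'I_n}} | E \subset S)
                 (p ^ #|E| * (1 - p) ^ (#|S| - #|E|))); last first.
  by rewrite binom Rmult_1_r.
rewrite big_distrr /gnp_prob.
apply: eq_big => [E|E /andP[EP EF]].
  by rewrite subsetD -setI_eq0 setIC.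
have cE : (#|E| <= #|S|)%N.
  by apply: subset_leq_card; rewrite subsetD EP -setI_eq0.
rewrite /gnp_weight cP -addnBA // pow_add /=; change R1 with 1; ring.
Qed.

Lemma gnp_union_bound (J : finType) (P : pred J)
    (B : J -> {set {set 'I_n}} -> bool) (A : {set {set 'I_n}} -> bool) :
  (forall E : {set {set 'I_n}}, E \subset pairs n -> A E -> exists j, P j && B j E) ->
  gnp_prob p A <= \big[Rplus/R0]_(j | P j) gnp_prob p (B j).
Proof.
move=> covered; rewrite /gnp_prob.
apply: (Rle_trans _ (\big[Rplus/R0]_(E : {set {set 'I_n}} | (E \subset pairs n) && A E)
   \big[Rplus/R0]_(j | P j && B j E) gnp_weight p E)).
  apply: sum_le => E /andP[EP AE]; have [j Pj] := covered E EP AE.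
  apply: (sum_ge_term (P := fun i => P i && B i E) (F := fun=> gnp_weight p E) Pj).
  by move=> i _; apply: gnp_weight_ge0.
apply: (Rle_trans _ (\big[Rplus/R0]_(E : {set {set 'I_n}} | E \subset pairs n)
   \big[Rplus/R0]_(j | P j && B j E) gnp_weight p E)).
  apply: sum_le_sub => [E /andP[] //|E _].
  by apply: sum_ge0 => j _; apply: gnp_weight_ge0.
apply: Req_le; rewrite (exchange_big_dep P) /=; last by move=> E j _ /andP[].
by apply: eq_bigr => j Pj; apply: eq_bigl => E; rewrite Pj.
Qed.

End RandomGraph.

Definition restrict (T : finType) (e : rel T) (A : {set T}) : rel T :=
  fun a b => [&& e a b, a \in A & b \in A].

Lemma connect_closed (T : finType) (e : rel T) (A : {set T}) x y :
  (forall a b, e a b -> a \in A -> b \in A) -> connect e x y -> x \in A -> y \in A.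
Proof.
move=> closedA /connectP[s es ->]; elim: s x es => //= z s IH x /andP[exz es] xA.
exact: IH es (closedA _ _ exz xA).
Qed.

Lemma path_exit (T : finType) (e : rel T) (A : {set T}) x s :
  path e x s -> x \in A -> last x s \notin A ->
  exists x' y', [/\ connect (restrict e A) x x', x' \in A, y' \notin A & e x' y'].
Proof.
elim: s x => [|z s IH] x /=; first by move=> _ ->.
case/andP=> exz es xA lastA; case zA: (z \in A); last first.
  by exists x, z; rewrite zA; split => //; apply: connect0.
have [x' [y' [xx' x'A y'A ex'y']]] := IH z es zA lastA.
exists x', y'; split => //; apply: connect_trans xx'.
by apply: connect1; rewrite /restrict exz xA zA.
Qed.

Lemma card_bigcup_le (I T : finType) (P : pred I) (F : I -> {set T}) :
  (#|\bigcup_(i | P i) F i| <= \sum_(i | P i) #|F i|)%N.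
Proof.
apply: (big_ind2 (fun (S : {set T}) (k : nat) => #|S| <= k)%N) => //.
  by rewrite cards0.
move=> A a B b Aa Bb; rewrite cardsU.
exact: leq_trans (leq_subr _ _) (leq_add Aa Bb).
Qed.

Section ConnectedGraph.
Variables (n : nat) (G : rel 'I_n).
Hypothesis G_sym : symmetric G.
Hypothesis G_connected : forall x y, connect G x y.

Lemma nbhd_nonempty (U : {set 'I_n}) u v :
  u \in U -> v \notin U -> exists y, y \in nbhd G U.
Proof.
move=> uU vU; have /connectP[s Gs vlast] := G_connected u v.
have lastU : last u s \notin U by rewrite -vlast.
have [x' [y' [_ x'U y'U Gx'y']]] := path_exit Gs uU lastU.
by exists y'; rewrite inE y'U; apply/existsP; exists x'; rewrite x'U G_sym.
Qed.

Lemma maxdeg_ge1 : (2 <= n)%N -> (1 <= maxdeg G)%N.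
Proof.
move=> n2; have n0 : (0 < n)%N by apply: leq_trans n2.
pose x := Ordinal n0; pose y := Ordinal n2.
have yx : y \notin [set x] by rewrite inE.
have [z] := nbhd_nonempty (set11 x) yx.
rewrite inE => /andP[_ /existsP[u /andP[]]]; rewrite inE => /eqP -> Gzx.
apply: leq_trans (_ : deg G x <= _)%N.
  by apply/card_gt0P; exists z; rewrite inE G_sym.
exact: (leq_bigmax_cond (F := deg G)).
Qed.

Lemma card_nbhd_le (W : {set 'I_n}) : (#|nbhd G W| <= maxdeg G * #|W|)%N.
Proof.
have cover : nbhd G W \subset \bigcup_(u in W) [set v | G u v].
  apply/subsetP => v; rewrite inE => /andP[_ /existsP[u /andP[uW Gvu]]].
  by apply/bigcupP; exists u; rewrite // inE G_sym.
apply: leq_trans (subset_leq_card cover) _; apply: leq_trans (card_bigcup_le _ _) _.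
rewrite mulnC -sum_nat_const; apply: leq_sum => u _.
exact: (leq_bigmax_cond (F := deg G)).
Qed.

(* Every component of
   G - W meets N_G(W), so a union of such components is determined by W
   together with its trace on N_G(W); see components_meeting_trace. *)
Definition components_meeting (W C : {set 'I_n}) : {set 'I_n} :=
  [set v | (v \notin W) && [exists c in C, connect (restrict G (~: W)) c v]].

Lemma components_meeting_trace (U W : {set 'I_n}) w :
  [disjoint U & W] -> nbhd G U \subset W -> w \in W ->
  components_meeting W (U :&: nbhd G W) = U.
Proof.
move=> dUW NUW wW.
have U_closed a b : restrict G (~: W) a b -> a \in U -> b \in U.
  case/and3P=> Gab _; rewrite in_setC => bW aU; apply: contraNT bW => bU.
  by apply: (subsetP NUW); rewrite inE bU; apply/existsP; exists a; rewrite aU G_sym.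
have restrict_sym : connect_sym (restrict G (~: W)).
  apply: sym_connect_sym => a b; rewrite /restrict G_sym.
  by case: (a \in _); case: (b \in _); rewrite ?andbT ?andbF.
apply/setP => v; rewrite inE; apply/idP/idP.
  case/andP=> _ /existsP[c /andP[]]; rewrite inE => /andP[cU _] cv.
  exact: connect_closed U_closed cv cU.
move=> vU; have vW : v \notin W by rewrite (disjointFr dUW vU).
have /connectP[s Gs wlast] := G_connected v w.
have vW' : v \in ~: W by rewrite in_setC.
have lastW : last v s \notin ~: W by rewrite -wlast in_setC negbK.
have [x' [y' [vx' x'W y'W Gx'y']]] := path_exit Gs vW' lastW.
rewrite in_setC in x'W; rewrite in_setC negbK in y'W; rewrite vW; apply/existsP; exists x'.
rewrite inE (connect_closed U_closed vx' vU) restrict_sym vx' andbT.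
by rewrite inE x'W; apply/existsP; exists y'; rewrite y'W.
Qed.

End ConnectedGraph.

Definition cross_pairs (n : nat) (U T : {set 'I_n}) : {set {set 'I_n}} :=
  [set [set u; t] | u in U, t in T].

Section CrossPairs.
Variables (n : nat) (U T : {set 'I_n}).
Hypothesis UT_disjoint : [disjoint U & T].

Lemma cross_neq u t : u \in U -> t \in T -> u != t.
Proof. by move=> uU tT; apply: contraTneq tT => <-; rewrite (disjointFr UT_disjoint uU). Qed.

Lemma cross_pairs_sub : cross_pairs U T \subset pairs n.
Proof.
apply/subsetP => f /imset2P[u t uU tT ->].
by rewrite inE cards2 cross_neq.
Qed.

(* Distinct (u, t) give distinct pairs since U and T are disjoint. *)
Lemma card_cross_pairs : #|cross_pairs U T| = (#|U| * #|T|)%N.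
Proof.
rewrite /cross_pairs curry_imset2X card_in_imset ?cardsX //.
move=> [u t] [u' t']; rewrite !in_setX /= => /andP[uU tT] /andP[u'U t'T] eqp.
have : u \in [set u'; t'] by rewrite -eqp set21.
case/set2P => [eu|eu]; last by move: (cross_neq uU t'T); rewrite eu eqxx.
subst u'; have : t \in [set u; t'] by rewrite -eqp set22.
case/set2P => [et|->] //; by move: (cross_neq uU tT); rewrite et eqxx.
Qed.

End CrossPairs.

Lemma no_cross_edges n (G : rel 'I_n) (E : {set {set 'I_n}}) (U : {set 'I_n}) :
  E :&: cross_pairs U (~: (U :|: nbhd (graph_union G (edge_rel E)) U)) == set0.
Proof.
apply/eqP/setP => f; rewrite inE in_set0; apply/negP.
case/andP=> fE /imset2P[a b aU]; rewrite in_setC in_setU negb_or => /andP[bU bW] ef.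
move/negP: bW; apply; rewrite inE bU; apply/existsP; exists a.
have ba : b != a by apply: contraNneq bU => ->.
by rewrite aU /graph_union /edge_rel ba setUC -ef fE orbT.
Qed.

Definition Rltb (x y : R) : bool := if Rlt_dec x y then true else false.

Lemma RlebP x y : reflect (x <= y) (Rleb x y).
Proof. by rewrite /Rleb; case: Rle_dec => h; constructor. Qed.

Lemma RltbP x y : reflect (x < y) (Rltb x y).
Proof. by rewrite /Rltb; case: Rlt_dec => h; constructor. Qed.

(* If iota(H) < th (with th below the seed n of the minimum), some U with
   0 < |U| <= n/2 has |N_H(U)| < th |U|. *)
Lemma small_expansion_witness n (H : rel 'I_n) (th : R) :
  th <= INR n -> ~~ Rleb th (vertex_expansion H) ->
  exists U : {set 'I_n}, [/\ (0 < #|U|)%N, (#|U|.*2 <= n)%N &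
                              INR #|nbhd H U| < th * INR #|U|].
Proof.
move=> th_n /RlebP bad.
have [U /and3P[U0 Uhalf /RltbP lt] | none] := pickP (fun U : {set 'I_n} =>
  [&& (0 < #|U|)%N, (#|U|.*2 <= n)%N & Rltb (INR #|nbhd H U| / INR #|U|) th]).
  exists U; split => //; have U0R : 0 < INR #|U| by apply: lt_0_INR; apply/ltP.
  have := Rmult_lt_compat_r _ _ _ U0R lt.
  by rewrite /Rdiv Rmult_assoc Rinv_l ?Rmult_1_r //; lra.
case: bad; apply: (big_ind (fun x => th <= x)) => // [x y|U /andP[U0 Uhalf]].
  exact: Rmin_glb.
by move: (none U); rewrite U0 Uhalf /=; case: RltbP => // /Rnot_lt_le.
Qed.

Lemma edge_prob01 (n : nat) (q : R) : (0 < n)%N -> 0 <= q <= 1 -> 0 <= q / INR n <= 1.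
Proof.
move=> n0 q01; have N1 : 1 <= INR n by have := le_INR 1 n (elimT leP n0).
split; first by apply: Rmult_le_pos; [lra | apply: Rlt_le; apply: Rinv_0_lt_compat; lra].
by apply: (Rmult_le_reg_r (INR n)); [lra | rewrite /Rdiv Rmult_assoc Rinv_l; lra].
Qed.

Lemma ln2_le_ln (n : nat) : (2 <= n)%N -> ln 2 <= ln (INR n).
Proof.
move=> n2; have N2 : 2 <= INR n by have := le_INR 2 n (elimT leP n2).
by case: (Rle_lt_or_eq_dec _ _ N2) => [/ln_increasing|<-]; lra.
Qed.

Lemma exp_le x y : x <= y -> exp x <= exp y.
Proof. by case/Rle_lt_or_eq_dec => [/exp_increasing|->]; lra. Qed.

Lemma exp_pow y k : exp y ^ k = exp (INR k * y).
Proof. by rewrite -Rpower_pow; [rewrite /Rpower ln_exp | apply: exp_pos]. Qed.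

(* (1 - p)^m <= exp(-p m), from 1 - p <= exp(-p). *)
Lemma pow_one_sub_le_exp p m : p <= 1 -> (1 - p) ^ m <= exp (- (p * INR m)).
Proof.
move=> p1; rewrite (_ : - (p * INR m) = INR m * - p); last ring.
rewrite -exp_pow.
by apply: pow_incr; have := exp_ineq1_le (- p); lra.
Qed.

(* The arithmetic core of the per-certificate estimate: if u + t + w >= N,
   2u <= N and w < th u with th <= 1/2, then t >= N/4, so the expected number
   q u t / N of cross edges exceeds 4 w K as soon as 16 th K <= q. *)
Lemma cross_exponent (N u t w q th K : R) :
  0 < N -> 0 <= u -> 0 <= w -> 0 <= q -> 0 <= K ->
  N <= t + u + w -> 2 * u <= N -> w < th * u -> th <= / 2 -> 16 * th * K <= q ->
  4 * w * K <= q / N * (u * t).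
Proof.
move=> N0 u0 w0 q0 K0 Ntuw uN wu th2 thK.
have tN : N / 4 <= t by nra.
have quN : q * u / 4 <= q / N * (u * t).
  have -> : q * u / 4 = q / N * (u * (N / 4)) by field; lra.
  apply: Rmult_le_compat_l; last by apply: Rmult_le_compat_l.
  by apply: Rmult_le_pos; [lra | apply: Rlt_le; apply: Rinv_0_lt_compat].
nra.
Qed.

Lemma avoid_cross_prob n (U W : {set 'I_n}) (q th K : R) :
  (0 < n)%N -> 0 <= q <= 1 -> 0 <= K -> th <= / 2 -> 16 * th * K <= q ->
  (#|U|.*2 <= n)%N -> INR #|W| < th * INR #|U| ->
  gnp_prob (q / INR n) (fun E => E :&: cross_pairs U (~: (U :|: W)) == set0)
  <= exp (-4 * INR #|W| * K).
Proof.
move=> n0 q01 K0 th2 thK Uhalf small.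
have N0 : 0 < INR n by apply: lt_0_INR; apply/ltP.
have p01 := edge_prob01 n0 q01.
have dUT : [disjoint U & ~: (U :|: W)].
  by rewrite disjoint_subset; apply/subsetP => x xU; rewrite !inE xU.
rewrite gnp_prob_avoid // ?cross_pairs_sub // card_cross_pairs //.
apply: Rle_trans (pow_one_sub_le_exp _ (proj2 p01)) _; apply: exp_le.
have cover : (n <= #|~: (U :|: W)| + (#|U| + #|W|))%N.
  have := cardsC (U :|: W); rewrite card_ord => total.
  by rewrite -{1}total addnC leq_add2l cardsU leq_subr.
have coverR : INR n <= INR #|~: (U :|: W)| + INR #|U| + INR #|W|.
  by move/leP: cover => /le_INR; rewrite !plus_INR; lra.
have UhalfR : 2 * INR #|U| <= INR n.
  by move/leP: Uhalf => /le_INR; rewrite -addnn plus_INR; lra.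
have := cross_exponent N0 (pos_INR #|U|) (pos_INR #|W|) (proj1 q01) K0
          coverR UhalfR small th2 thK.
rewrite mult_INR; lra.
Qed.

(* Summing over the certificates (W, C) with W nonempty and C a subset of a
   set S W of size at most d |W|: the 2^(d |W|) choices of C are absorbed by
   exp(-4 |W| d^3 L) when L >= ln 2 and d >= 1, leaving a geometric-type
   sum over the nonempty W. *)
Lemma certificates_sum (T : finType) (S : {set T} -> {set T}) (d : nat) (L : R) :
  (1 <= d)%N -> ln 2 <= L -> (forall W, #|S W| <= d * #|W|)%N ->
  \big[Rplus/R0]_(i : {set T} * {set T} | (0 < #|i.1|)%N && (i.2 \subset S i.1))
     exp (-4 * INR #|i.1| * INR d ^ 3 * L)
  <= (1 + exp (-3 * L)) ^ #|T| - 1.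
Proof.
move=> d1 L2 cardS; rewrite -sum_nonempty_subsets.
rewrite -(pair_big_dep (fun W : {set T} => 0 < #|W|)%N
  (fun W C : {set T} => C \subset S W)
  (fun (W : {set T}) (_ : {set T}) => exp (-4 * INR #|W| * INR d ^ 3 * L))).
rewrite (eq_bigl (fun W : {set T} => W != set0)); last by move=> W; rewrite card_gt0.
apply: sum_le => W _; set h := exp (-4 * INR #|W| * INR d ^ 3 * L).
rewrite (eq_bigr (fun _ => h * 1)) => [|C _]; last by rewrite Rmult_1_r.
rewrite -big_distrr card_subsets /h.
have d1R : 1 <= INR d by have := le_INR 1 d (elimT leP d1).
have w0 := pos_INR #|W|.
have L0 : 0 <= L by have := ln_lt_2; lra.
apply: (Rle_trans _ (exp (-4 * INR #|W| * INR d ^ 3 * L) * exp (INR (d * #|W|) * L))).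
  apply: Rmult_le_compat_l; first exact/Rlt_le/exp_pos.
  apply: Rle_trans (Rle_pow 2 _ _ _ (elimT leP (cardS W))) _; first lra.
  rewrite -{1}(exp_ln 2) ?exp_pow; last lra.
  by apply: exp_le; apply: Rmult_le_compat_l => //; apply: pos_INR.
rewrite -exp_plus exp_pow mult_INR; apply: exp_le.
have d3 : INR d <= INR d ^ 3 by simpl; nra.
have wL : 0 <= INR #|W| * L by apply: Rmult_le_pos.
have := Rmult_le_compat_r _ _ _ wL d3.
have := Rmult_le_compat_r _ _ _ wL (Rle_trans _ _ _ d1R d3).
lra.
Qed.

(* The final sum (1 + n^-3)^n - 1 is at most 2/n: it is at most
   exp(1/n^2) - 1, and exp t - 1 <= 2t for 0 < t <= 1/4. *)
Lemma tail_bound n : (2 <= n)%N -> (1 + exp (-3 * ln (INR n))) ^ n - 1 <= 2 / INR n.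
Proof.
move=> n2; have N2 : 2 <= INR n by have := le_INR 2 n (elimT leP n2).
set N := INR n in N2 *; set x := exp (-3 * ln N).
have x_eq : x = / (N * N * N).
  rewrite /x (_ : -3 * ln N = - (INR 3 * ln N)); last by rewrite /=; ring.
  by rewrite exp_Ropp -exp_pow exp_ln /=; [rewrite Rmult_1_r Rmult_assoc | lra].
set t := / (N * N).
have t_eq : N * x = t by rewrite x_eq /t; field; lra.
have t0 : 0 < t by apply: Rinv_0_lt_compat; nra.
have t4 : t <= / 4 by apply: Rinv_le_contravar; nra.
have tN : t <= / N by apply: Rinv_le_contravar; nra.
have pow_le_exp : (1 + x) ^ n <= exp t.
  rewrite -t_eq /N -exp_pow; apply: pow_incr.
  by have := exp_pos (-3 * ln N); have := exp_ineq1_le x; rewrite -/x; lra.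
have exp_t : exp t * (1 - t) <= 1.
  have := exp_ineq1_le (- t); rewrite exp_Ropp => le_inv.
  have := Rmult_le_compat_l _ _ _ (Rlt_le _ _ (exp_pos t)) le_inv.
  by rewrite Rinv_r; [lra | apply: Rgt_not_eq; apply: exp_pos].
have := exp_pos t; rewrite /Rdiv; nra.
Qed.

Section Certificates.
Variables (n : nat) (G : rel 'I_n).
Hypothesis G_sym : symmetric G.
Hypothesis G_connected : forall x y, connect G x y.

(* A certificate is a pair i = (W, C) describing the set
   U = components_meeting G W C; it certifies poor expansion at threshold th
   when W is nonempty, C lies in N_G(W), |U| <= n/2 and |W| < th |U|. *)
Definition certified_set (i : {set 'I_n} * {set 'I_n}) : {set 'I_n} :=
  components_meeting G i.1 i.2.

Definition certificate (th : R) (i : {set 'I_n} * {set 'I_n}) : bool :=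
  [&& (0 < #|i.1|)%N, i.2 \subset nbhd G i.1,
      (#|certified_set i|.*2 <= n)%N & Rltb (INR #|i.1|) (th * INR #|certified_set i|)].

(* Every edge set E for which iota(G u E) < th has a certificate (W, C) such
   that E has no edge between U and the vertices outside U and W: take a
   poorly expanding U, W = N_{G u E}(U) and C = U :&: N_G(W). *)
Lemma bad_event_certified (th : R) (E : {set {set 'I_n}}) :
  th <= INR n -> ~~ Rleb th (vertex_expansion (graph_union G (edge_rel E))) ->
  exists i, certificate th i &&
    (E :&: cross_pairs (certified_set i) (~: (certified_set i :|: i.1)) == set0).
Proof.
move=> th_n bad; have [U [U0 Uhalf small]] := small_expansion_witness th_n bad.
set W := nbhd (graph_union G (edge_rel E)) U in small.
have NUW : nbhd G U \subset W.
  apply/subsetP => v; rewrite !inE => /andP[vU /existsP[u /andP[uU Gvu]]].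
  by rewrite vU; apply/existsP; exists u; rewrite uU /graph_union Gvu.
have dUW : [disjoint U & W].
  by rewrite disjoint_subset; apply/subsetP => x xU; rewrite !inE xU.
have [u uU] := card_gt0P U0.
have [v vU] : exists v, v \notin U.
  have : (0 < #|~: U|)%N by move: (cardsC U); rewrite card_ord; lia.
  by case/card_gt0P => v; rewrite in_setC; exists v.
have [w wNU] := nbhd_nonempty G_sym G_connected uU vU.
have wW : w \in W := subsetP NUW w wNU.
exists (W, U :&: nbhd G W).
rewrite /certificate /certified_set /= (components_meeting_trace G_sym G_connected dUW NUW wW).
rewrite subsetIr Uhalf no_cross_edges andbT.
by apply/andP; split; [apply/card_gt0P; exists w | apply/RltbP].
Qed.

Lemma expansion_failure_bound (q th : R) :
  (2 <= n)%N -> 0 <= q <= 1 -> th <= / 2 ->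
  16 * th * INR (maxdeg G) ^ 3 * ln (INR n) <= q ->
  gnp_prob (q / INR n)
    (fun E => ~~ Rleb th (vertex_expansion (graph_union G (edge_rel E))))
  <= (1 + exp (-3 * ln (INR n))) ^ n - 1.
Proof.
move=> n2 q01 th2 thK.
have N2 : 2 <= INR n by have := le_INR 2 n (elimT leP n2).
have L2 := ln2_le_ln n2.
have K0 : 0 <= INR (maxdeg G) ^ 3 * ln (INR n).
  by apply: Rmult_le_pos; [apply: pow_le; apply: pos_INR | have := ln_lt_2; lra].
have p01 := edge_prob01 (leq_trans (isT : (0 < 2)%N) n2) q01.
pose avoid i E := E :&: cross_pairs (certified_set i) (~: (certified_set i :|: i.1)) == set0.
apply: Rle_trans (gnp_union_bound p01 (P := certificate th) (B := avoid) _) _.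
  by move=> E _; apply: bad_event_certified; lra.
apply: (Rle_trans _ (\big[Rplus/R0]_(i | certificate th i)
           exp (-4 * INR #|i.1| * INR (maxdeg G) ^ 3 * ln (INR n)))).
  apply: sum_le => i /and4P[_ _ Uhalf /RltbP small].
  rewrite Rmult_assoc; apply: (avoid_cross_prob (th := th)) => //.
    exact: leq_trans n2.
  by rewrite -Rmult_assoc.
have := certificates_sum (maxdeg_ge1 G_sym G_connected n2) L2 (card_nbhd_le G_sym).
rewrite card_ord; apply: Rle_trans.
apply: sum_le_sub => [i /and4P[-> -> _ _] //|i _].
exact/Rlt_le/exp_pos.
Qed.

End Certificates.

Lemma threshold_conditions (r D L : R) :
  1 <= r -> 1 <= D -> / 2 <= L ->
  1 / 16 / (r * D ^ 3 * L) <= / 2 /\ 16 * (1 / 16 / (r * D ^ 3 * L)) * D ^ 3 * L <= / r.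
Proof.
move=> r1 D1 L2; have D3 : 1 <= D ^ 3 by apply: pow_R1_Rle.
have K : / 2 <= r * D ^ 3 * L.
  have rD : 1 <= r * D ^ 3 by nra.
  nra.
split.
  apply: (Rmult_le_reg_r (r * D ^ 3 * L)); first lra.
  rewrite /Rdiv Rmult_assoc Rinv_l; lra.
apply: Req_le; field; repeat split; lra.
Qed.

Lemma Un_cv_one (u : nat -> R) :
  (forall n, (2 <= n)%N -> 0 <= 1 - u n <= 2 / INR n) -> Un_cv u 1.
Proof.
move=> close eps eps0; have [N0 [N0eps N0pos]] := archimed_cor1 (eps / 2) ltac:(lra).
exists (N0 + 2)%nat => n nN0; have n2 : (2 <= n)%N by apply/leP; lia.
have N0R : 0 < INR N0 by apply: lt_0_INR.
have N0n : INR N0 <= INR n by apply: le_INR; lia.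
have [lo hi] := close n n2; rewrite /Rdist Rabs_minus_sym Rabs_pos_eq //.
have : / INR n <= / INR N0 by apply: Rinv_le_contravar.
rewrite /Rdiv; lra.
Qed.

Theorem mainTheorem2 :
  forall a : R, 0 < a < 1 ->
  exists c : R, 0 < c /\
  forall G : forall n : nat, rel 'I_n,
    (forall n : nat, is_graph (G n) /\ connected (G n)) ->
    Un_cv
      (fun n : nat =>
         gnp_prob (Rpower (INR n) (- a) / INR n)
           (fun E : {set {set 'I_n}} =>
              Rleb (c / (Rpower (INR n) a * INR (maxdeg (G n)) ^ 3 * ln (INR n)))
                   (vertex_expansion (graph_union (G n) (edge_rel E)))))
      1.
Proof.
move=> a a01; exists (1 / 16); split; first lra.
move=> G G_ok; apply: Un_cv_one => n n2.
have [[G_sym _] G_connected] := G_ok n.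
have N2 : 2 <= INR n by have := le_INR 2 n (elimT leP n2).
have r1 : 1 <= Rpower (INR n) a.
  by rewrite -(Rpower_O (INR n)); [apply: Rle_Rpower|]; lra.
have D1 : 1 <= INR (maxdeg (G n)).
  by have := le_INR _ _ (elimT leP (maxdeg_ge1 G_sym G_connected n2)).
have L2 : / 2 <= ln (INR n) by have := ln2_le_ln n2; have := ln_lt_2; lra.
have [th2 thq] := threshold_conditions r1 D1 L2.
rewrite gnp_prob_compl Rpower_Ropp in thq *.
have q01 : 0 <= / Rpower (INR n) a <= 1.
  split; [apply/Rlt_le/Rinv_0_lt_compat | rewrite -Rinv_1; apply: Rinv_le_contravar]; lra.
have failure := expansion_failure_bound G_sym G_connected n2 q01 th2 thq.
have p01 := edge_prob01 (leq_trans (isT : (0 < 2)%N) n2) q01.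
set bad := gnp_prob _ _ in failure *; have bad0 : 0 <= bad := gnp_prob_ge0 p01 _.
have := tail_bound n2; lra.
Qed.
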